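(* Let $k\ge2$, $1\le m\le k-1$, and let $(k_1,\dots,k_m)$ be an ordered partition of $k$ into positive integers. Let $X_{k_1,\dots,k_m}$ be the set of $k$-admissible $m\times k$ matrices with entries in $\{0,\pm1\}$, having exactly one nonzero entry in each column and exactly $k_i$ nonzero entries in row $i$ for each $i$. Then $$\#X_{k_1,\dots,k_m}=2^{k-m}\prod_{i=1}^{m-1}\binom{k-\sum_{j=1}^{i-1}k_j-1}{k_i-1},$$ where the empty product is $1$ and the empty sum is $0$.
   Context: For $k\ge2$, a division $(\nu,\mu)$ of $\{1,\dots,k\}$ consists of $1\le m\le k-1$ and strictly increasing sequences $\nu_1<\dots<\nu_m$, $\mu_1<\dots<\mu_{k-m}$ in $\{1,\dots,k\}$ which are disjoint. Given a positive integer $q$, an $m\times k$ integer matrix $D=(d_{ij})$ is $(\nu,\mu)$-admissible if no column vanishes, the gcd of its entries is $1$, $d_{i\nu_j}=q\delta_{ij}$ for $1\le i,j\le m$, and $d_{i\mu_j}=0$ whenever $\mu_j<\nu_i$. $D$ is $k$-admissible if it is $(\nu,\mu)$-admissible for some division $(\nu,\mu)$ and some positive integer $q$. *)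

From mathcomp Require Import all_boot all_order all_algebra.
Set Implicit Arguments. Unset Strict Implicit. Unset Printing Implicit Defensive.
Import Order.TTheory GRing.Theory Num.Theory.
Local Open Scope ring_scope.

(* Indices are 0-based: rows 'I_m, columns 'I_k. *)

Definition division (k m : nat) (nu : 'I_m -> 'I_k) (mu : 'I_(k - m) -> 'I_k)
  : Prop :=
  [/\ (1 <= m <= k - 1)%N,
      (forall i j : 'I_m, (i < j)%N -> (nu i < nu j)%N),
      (forall i j : 'I_(k - m), (i < j)%N -> (mu i < mu j)%N) &
      (forall (i : 'I_m) (j : 'I_(k - m)), nu i != mu j)].

Definition gcd_entries (m k : nat) (D : 'M[int]_(m, k)) : int :=
  \big[gcdz/0]_(i < m) \big[gcdz/0]_(j < k) D i j.

Definition numu_admissible (k m : nat) (nu : 'I_m -> 'I_k)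
  (mu : 'I_(k - m) -> 'I_k) (q : int) (D : 'M[int]_(m, k)) : Prop :=
  [/\ 0 < q,
      (forall j : 'I_k, exists i : 'I_m, D i j != 0),
      gcd_entries D = 1,
      (forall i j : 'I_m, D i (nu j) = q * (i == j)%:R) &
      (forall (i : 'I_m) (j : 'I_(k - m)), (mu j < nu i)%N -> D i (mu j) = 0)].

Definition k_admissible (k m : nat) (D : 'M[int]_(m, k)) : Prop :=
  exists (nu : 'I_m -> 'I_k) (mu : 'I_(k - m) -> 'I_k) (q : int),
    division nu mu /\ numu_admissible nu mu q D.

(* The set X_{k_1,...,k_m} (membership predicate); kk i is the part k_{i+1} *)
Definition in_X {k m : nat} (kk : nat -> nat) (D : 'M[int]_(m, k)) : Prop :=
  [/\ k_admissible D,
      (forall i j, D i j \in [:: 0; 1; -1]),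
      (forall j : 'I_k, #|[set i : 'I_m | D i j != 0]| = 1%N) &
      (forall i : 'I_m, #|[set j : 'I_k | D i j != 0]| = kk i)].

(* A matrix of X_{k_1,...,k_m} is determined by its column word: for each column, the row
   of its unique nonzero entry and the sign of that entry.  Admissibility forces q = 1 and
   nu_i to be the first column meeting row i, so it says exactly that the rows first occur
   in the order 1, ..., m and that the first entry of every row is +1.  Such words are
   counted by peeling off row 1: the word starts with (1, +), the other k_1 - 1 entries of
   row 1 occupy any k_1 - 1 of the remaining k - 1 positions with arbitrary signs, and the
   remaining letters, renumbered, form a word of the same kind for (k_2, ..., k_m).  This
   contributes the factor 2^(k_1 - 1) C(k - 1, k_1 - 1). *)

From mathcomp Require Import all_boot all_order all_algebra.
From mathcomp Require Import zify ring.
Set Implicit Arguments. Unset Strict Implicit. Unset Printing Implicit Defensive.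
Import GRing.Theory Num.Theory.

Lemma mem_map_cons (T : eqType) (y x : T) (s : seq T) (l : seq (seq T)) :
  (x :: s \in map (cons y) l) = (x == y) && (s \in l).
Proof.
by apply/mapP/andP => [[t tl [-> ->]] | [/eqP -> sl]]; last exists s.
Qed.

Lemma nil_notin_map_cons (T : eqType) (y : T) (l : seq (seq T)) : [::] \notin map (cons y) l.
Proof. by apply/mapP => -[]. Qed.

Fixpoint signed_masks (n r : nat) : seq (seq (option bool)) :=
  match n, r with
  | 0, 0 => [:: [::]]
  | 0, _.+1 => [::]
  | n'.+1, 0 => map (cons None) (signed_masks n' 0)
  | n'.+1, r'.+1 =>
      map (cons (Some true)) (signed_masks n' r') ++
      map (cons (Some false)) (signed_masks n' r') ++ map (cons None) (signed_masks n' r)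
  end.

Lemma size_signed_masks n r : size (signed_masks n r) = 'C(n, r) * 2 ^ r.
Proof.
elim: n r => [|n IH] [|r] //=; first by rewrite size_map IH !bin0.
rewrite !size_cat !size_map !IH binS expnS; ring.
Qed.

Lemma mem_signed_masks n r p :
  (p \in signed_masks n r) = (size p == n) && (count isSome p == r).
Proof.
elim: n r p => [|n IH] [|r] [|o p] //=; rewrite ?mem_cat ?mem_map_cons ?IH;
  rewrite ?(negbTE (nil_notin_map_cons _ _)) //.
all: rewrite eqSS; case: o => [[]|] /=; rewrite ?eqSS ?orbF //=.
all: by case: (_ == _).
Qed.

Lemma uniq_signed_masks n r : uniq (signed_masks n r).
Proof.
have cons_inj (o : option bool) : injective (cons o) by move=> ? ? [].
elim: n r => [|n IH] [|r] //=; first by rewrite (map_inj_uniq (cons_inj _)).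
rewrite !cat_uniq !(map_inj_uniq (cons_inj _)) !IH /= andbT.
apply/andP; split; apply/hasPn => x; rewrite ?mem_cat;
  by [case/orP=> /mapP [p _ ->]; rewrite mem_map_cons | case/mapP=> p _ ->; rewrite mem_map_cons].
Qed.

(* The letter (i, s) of a column: its nonzero entry lies in row i and is +1 iff s. *)
Notation letter := (nat * bool)%type.
Definition rows (w : seq letter) : seq nat := map fst w.
Definition first_occ (w : seq letter) (i : nat) : nat := index i (rows w).

Fixpoint interleave (p : seq (option bool)) (w : seq letter) : seq letter :=
  match p, w with
  | Some s :: p', _ => (0, s) :: interleave p' w
  | None :: p', x :: w' => (x.1.+1, x.2) :: interleave p' w'
  | _, _ => [::]
  end.

Definition pattern (t : seq letter) : seq (option bool) :=
  [seq if x.1 is 0 then Some x.2 else None | x <- t].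

Fixpoint unshift (t : seq letter) : seq letter :=
  if t is (i, s) :: t' then (if i is i'.+1 then (i', s) :: unshift t' else unshift t')
  else [::].

Lemma interleaveK t : interleave (pattern t) (unshift t) = t.
Proof. by elim: t => //= [[[|n] s] t IH] /=; rewrite IH. Qed.

Lemma count_None (p : seq (option bool)) : count_mem None p + count isSome p = size p.
Proof. by elim: p => //= [[?|] p IH]; rewrite -IH /=; lia. Qed.

Lemma interleave_spec p w : size w = count_mem None p ->
  [/\ pattern (interleave p w) = p, unshift (interleave p w) = w
    & size (interleave p w) = size p].
Proof.
elim: p w => [|[s|] p IH] [|x w] //= sw; rewrite ?add0n ?add1n in sw.
- by have [-> -> ->] := IH [::] sw.
- by have [-> -> ->] := IH (x :: w) sw.
- by have [-> -> ->] := IH w (succn_inj sw); case: x.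
Qed.

Lemma interleave_mask_spec r n p w : p \in signed_masks (r + n) r -> size w = n ->
  [/\ pattern (interleave p w) = p, unshift (interleave p w) = w
    & size (interleave p w) = r + n].
Proof.
rewrite mem_signed_masks => /andP [/eqP size_p /eqP count_p] size_w.
rewrite -size_p; apply: interleave_spec; apply: (@addIn r).
by rewrite -{2}count_p count_None size_p size_w addnC.
Qed.

Lemma count_unshift i t : count_mem i (rows (unshift t)) = count_mem i.+1 (rows t).
Proof. by elim: t => //= [[[|n] s] t IH] /=; rewrite IH. Qed.

Lemma count_pattern t : count isSome (pattern t) = count_mem 0 (rows t).
Proof. by elim: t => //= [[[|n] s] t IH] /=; rewrite IH. Qed.

Lemma size_unshift t : size (unshift t) + count_mem 0 (rows t) = size t.
Proof. by elim: t => //= [[[|n] s] t IH] /=; rewrite -IH; lia. Qed.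

Lemma first_occ_unshift i j t :
  (first_occ t i.+1 < first_occ t j.+1) = (first_occ (unshift t) i < first_occ (unshift t) j).
Proof.
rewrite /first_occ; elim: t => //= [[[|n] s] t IH] /=; first by rewrite ltnS.
by rewrite !eqSS; case: (n == i); case: (n == j).
Qed.

Lemma sign_unshift i t :
  (nth (0, true) t (first_occ t i.+1)).2 = (nth (0, true) (unshift t) (first_occ (unshift t) i)).2.
Proof.
rewrite /first_occ; elim: t => //= [[[|n] s] t IH] /=; first by rewrite IH.
by rewrite eqSS; case: (n == i).
Qed.

Lemma all_unshift n t :
  all (fun x : letter => x.1 < n.+1) t -> all (fun x : letter => x.1 < n) (unshift t).
Proof.
elim: t => //= [[[|i] s] t IH] /andP [lt_i /IH all_t] //=.
by rewrite -ltnS lt_i.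
Qed.

Lemma all_interleave n p w :
  all (fun x : letter => x.1 < n) w -> all (fun x : letter => x.1 < n.+1) (interleave p w).
Proof.
elim: p w => [|[s|] p IH] [|x w] //=.
- by move=> _; apply: IH.
- by move=> all_w; rewrite IH.
- by case/andP=> lt_x /IH ->; rewrite andbT.
Qed.

Lemma ltn_homo_bounded n (f : nat -> nat) : (forall i, i.+1 < n -> f i < f i.+1) ->
  forall i j, i < j -> j < n -> f i < f j.
Proof.
move=> f_step i j lt_ij lt_jn; apply: (homo_ltn_in (D := gtn n) ltn_trans) => //.
- by move=> a b _; rewrite !inE => lt_b c /andP [_ /ltn_trans]; apply.
- by move=> a _; rewrite inE => /f_step.
- by rewrite inE (ltn_trans lt_ij).
Qed.

Definition admissible_word (c : seq nat) (w : seq letter) : Prop :=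
  [/\ size w = sumn c,
      all (fun x : letter => x.1 < size c) w,
      forall i, i < size c -> count_mem i (rows w) = nth 0 c i,
      forall i, i.+1 < size c -> first_occ w i < first_occ w i.+1 &
      forall i, i < size c -> (nth (0, true) w (first_occ w i)).2].

Fixpoint admissible_words (c : seq nat) : seq (seq letter) :=
  if c is c0 :: c' then
    [seq (0, true) :: interleave p w | w <- admissible_words c',
                                       p <- signed_masks (c0.-1 + sumn c') c0.-1]
  else [:: [::]].

Section AdmissibleCons.
Variables (c0 : nat) (c' : seq nat).
Hypothesis c0_gt0 : 0 < c0.

Lemma admissible_word_interleave p w :
  p \in signed_masks (c0.-1 + sumn c') c0.-1 -> admissible_word c' w ->
  admissible_word (c0 :: c') ((0, true) :: interleave p w).
Proof.
move=> p_mask [sw rows_w count_w first_w sign_w].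
have [pattern_u unshift_u size_u] := interleave_mask_spec p_mask sw.
have count_p : count isSome p = c0.-1 by move: p_mask; rewrite mem_signed_masks => /andP [_ /eqP].
set u := interleave p w in pattern_u unshift_u size_u *.
split=> /=.
- lia.
- exact: all_interleave.
- case=> [|i] lt_i /=; first by rewrite -count_pattern pattern_u count_p; lia.
  by rewrite add0n -count_unshift unshift_u count_w.
- case=> [|i] //= lt_i.
  by rewrite /first_occ /= ltnS -!/(first_occ _ _) first_occ_unshift unshift_u first_w.
- by case=> [|i] //= lt_i; rewrite /first_occ /= -/(first_occ _ _) sign_unshift unshift_u sign_w.
Qed.

Lemma admissible_word_cons t : admissible_word (c0 :: c') t ->
  exists t', [/\ t = (0, true) :: t', pattern t' \in signed_masks (c0.-1 + sumn c') c0.-1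
                & admissible_word c' (unshift t')].
Proof.
case: t => [|[i s] t] [/= st rows_t count_t first_t sign_t]; first by lia.
have i0 : i = 0.
  case: i rows_t first_t {st count_t sign_t} => [|j] //= /andP [lt_j _] first_t.
  have := ltn_homo_bounded first_t (ltn0Sn j) lt_j.
  by rewrite /first_occ /= eqxx.
subst i; move: (sign_t 0 isT); rewrite /first_occ /= => ->.
exists t; split=> //.
- have := count_t 0 isT; rewrite mem_signed_masks size_map count_pattern /= => count0.
  apply/andP; split; apply/eqP; lia.
- split.
  + have := size_unshift t; have := count_t 0 isT; rewrite /= => ? ?; lia.
  + by apply: all_unshift; case/andP: rows_t.
  + by move=> i lt_i; rewrite count_unshift; apply: (count_t i.+1).
  + by move=> i lt_i; rewrite -first_occ_unshift; apply: (first_t i.+1).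
  + by move=> i lt_i; rewrite -sign_unshift; apply: (sign_t i.+1).
Qed.

End AdmissibleCons.

Lemma mem_admissible_words c : all (fun x => 0 < x) c ->
  forall w, (w \in admissible_words c) <-> admissible_word c w.
Proof.
elim: c => [|c0 c' IH] /=.
  move=> _ w; rewrite inE; split=> [/eqP -> // | [sw _ _ _ _]].
  by case: w sw.
case/andP=> c0_gt0 /IH {}IH w; split.
- case/allpairsP=> -[w' p] [/= /IH w'_adm p_mask ->].
  exact: admissible_word_interleave.
- case/admissible_word_cons=> // t [-> t_mask /IH t_adm].
  by apply/allpairsP; exists (unshift t, pattern t); rewrite interleaveK.
Qed.

Lemma uniq_admissible_words c : all (fun x => 0 < x) c -> uniq (admissible_words c).
Proof.
elim: c => [|c0 c' IH] //= /andP [c0_gt0 c'_pos].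
apply: allpairs_uniq => [||[w1 p1] [w2 p2]]; [exact: IH | exact: uniq_signed_masks |].
move=> /allpairsP [[u1 q1] [/= /(mem_admissible_words c'_pos) [sw1 _ _ _ _] mask1 [-> ->]]].
move=> /allpairsP [[u2 q2] [/= /(mem_admissible_words c'_pos) [sw2 _ _ _ _] mask2 [-> ->]]].
move=> /= [] eq12.
have [pattern1 unshift1 _] := interleave_mask_spec mask1 sw1.
have [pattern2 unshift2 _] := interleave_mask_spec mask2 sw2.
have := congr1 pattern eq12; have := congr1 unshift eq12.
by rewrite pattern1 pattern2 unshift1 unshift2 => -> ->.
Qed.

Lemma size_admissible_words c : all (fun x => 0 < x) c ->
  size (admissible_words c) =
    2 ^ (sumn c - size c) * \prod_(i < size c) 'C(sumn (drop i c) - 1, nth 0 c i - 1).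
Proof.
elim: c => [|c0 c' IH] /=; first by rewrite big_ord0.
case/andP=> c0_gt0 c'_pos; rewrite size_allpairs size_signed_masks IH // big_ord_recl /=.
have size_le : size c' <= sumn c'.
  by elim: c' c'_pos {IH} => //= x c IH /andP [x_gt0 /IH]; lia.
rewrite (_ : c0 + sumn c' - (size c').+1 = (sumn c' - size c') + c0.-1); last lia.
rewrite (_ : c0 + sumn c' - 1 = c0.-1 + sumn c'); last lia.
rewrite expnD subn1; ring.
Qed.

Lemma sumn_mkseq (f : nat -> nat) n : sumn (mkseq f n) = \sum_(i < n) f i.
Proof. by rewrite sumnE /mkseq big_map -(big_mkord xpredT) /index_iota subn0. Qed.

Lemma all_gt0_mkseq (kk : nat -> nat) m :
  (forall i, i < m -> 0 < kk i) -> all (fun x => 0 < x) (mkseq kk m).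
Proof. by move=> kk_gt0; apply/allP => x /mapP [i]; rewrite mem_iota => /andP [_ /kk_gt0] ? ->. Qed.

Lemma size_admissible_words_mkseq (k m : nat) (kk : nat -> nat) : 0 < m ->
  (forall i, i < m -> 0 < kk i) -> \sum_(i < m) kk i = k ->
  size (admissible_words (mkseq kk m)) =
    2 ^ (k - m) * \prod_(i < m.-1) 'C(k - \sum_(j < i) kk j - 1, kk i - 1).
Proof.
move=> m_gt0 kk_gt0 sum_kk.
have sumn_drop i : i <= m -> sumn (drop i (mkseq kk m)) = k - \sum_(j < i) kk j.
  move=> le_im; have := congr1 sumn (cat_take_drop i (mkseq kk m)).
  rewrite sumn_cat /mkseq -map_take take_iota (minn_idPl le_im) -/(mkseq _ _).
  by rewrite !sumn_mkseq sum_kk => <-; lia.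
rewrite size_admissible_words ?all_gt0_mkseq // size_mkseq sumn_mkseq sum_kk.
case: m m_gt0 kk_gt0 sum_kk sumn_drop => // m _ kk_gt0 sum_kk sumn_drop.
rewrite big_ord_recr /= nth_mkseq // sumn_drop //.
rewrite (_ : k - \sum_(j < m) kk j = kk m); last by rewrite -sum_kk big_ord_recr /=; lia.
rewrite binn muln1; congr (_ * _); apply: eq_bigr => i _.
have lt_im : i < m.+1 by rewrite ltnS ltnW.
by rewrite nth_mkseq // sumn_drop // ltnW.
Qed.

Lemma increasing_inj n p (f : 'I_n -> 'I_p) :
  (forall i j : 'I_n, i < j -> f i < f j) -> injective f.
Proof.
move=> f_incr i j fij; apply: val_inj; case: (ltngtP i j) => // [/f_incr|/f_incr];
  by rewrite fij ltnn.
Qed.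

Lemma division_cover k m (nu : 'I_m -> 'I_k) (mu : 'I_(k - m) -> 'I_k) :
  division nu mu -> forall j, (exists i, nu i = j) \/ (exists j', mu j' = j).
Proof.
case=> m_bounds nu_incr mu_incr nu_mu j.
set A := [set nu i | i in 'I_m]; set B := [set mu j | j in 'I_(k - m)].
have card_A : #|A| = m by rewrite card_imset ?card_ord //; exact: increasing_inj.
have card_B : #|B| = k - m by rewrite card_imset ?card_ord //; exact: increasing_inj.
have AB0 : A :&: B = set0.
  apply/setP => x; rewrite !inE; apply/negP => /andP [/imsetP [i _ ->] /imsetP [j' _ /eqP]].
  by rewrite (negbTE (nu_mu _ _)).
have AB : A :|: B = [set: 'I_k].
  by apply/eqP; rewrite eqEcard subsetT cardsT card_ord cardsU AB0 cards0 card_A card_B; lia.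
have : j \in A :|: B by rewrite AB inE.
by rewrite inE => /orP [/imsetP [i _ ->] | /imsetP [i _ ->]]; [left | right]; exists i.
Qed.

Lemma division_complement k m (nu : 'I_m -> 'I_k) : 0 < m <= k - 1 ->
  (forall i j : 'I_m, i < j -> nu i < nu j) -> exists mu, division nu mu.
Proof.
move=> m_bounds nu_incr.
set piv := [seq val (nu i) | i <- enum 'I_m].
set ns := [seq j <- iota 0 k | j \notin piv].
have uniq_piv : uniq piv.
  by rewrite map_inj_uniq ?enum_uniq // => i j /val_inj /(increasing_inj nu_incr).
have piv_sub : {subset piv <= iota 0 k} by move=> _ /mapP [i _ ->]; rewrite mem_iota /=.
have size_ns : size ns = k - m.
  have count_piv : count (mem piv) (iota 0 k) = m.
    rewrite -size_filter -[RHS](size_enum_ord m) -(size_map (fun i => val (nu i))) -/piv.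
    apply/perm_size/uniq_perm; [exact: filter_uniq (iota_uniq 0 k) | exact: uniq_piv | move=> x].
    by rewrite mem_filter andb_idr //; exact: piv_sub.
  have := count_predC (mem piv) (iota 0 k).
  by rewrite size_iota count_piv size_filter => /(canRL (addKn m)).
have ns_mem (j : 'I_(k - m)) : nth 0 ns j \in ns by rewrite mem_nth // size_ns.
have ns_lt (j : 'I_(k - m)) : nth 0 ns j < k.
  by have := ns_mem j; rewrite mem_filter mem_iota => /andP [_ /=].
exists (fun j => Ordinal (ns_lt j)); split=> // [i j lt_ij | i j] /=.
- apply: (sorted_ltn_nth ltn_trans); rewrite ?inE ?size_ns //.
  by apply: sorted_filter; [exact: ltn_trans | exact: iota_ltn_sorted].
- apply/eqP => /(congr1 val) /= nu_ns; have := ns_mem j.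
  by rewrite mem_filter -nu_ns (map_f (fun i => val (nu i))) ?mem_enum.
Qed.

Local Open Scope ring_scope.

Lemma big_gcdz_dvd (I : eqType) (r : seq I) (F : I -> int) x :
  x \in r -> (\big[gcdz/0]_(i <- r) F i %| F x)%Z.
Proof.
elim: r => //= y r IH; rewrite inE big_cons => /predU1P [-> | /IH].
  exact: dvdz_gcdl.
exact: dvdz_trans (dvdz_gcdr _ _).
Qed.

Lemma gcd_entries_eq1 m k (D : 'M[int]_(m, k)) i j : D i j = 1 -> gcd_entries D = 1.
Proof.
move=> Dij1; have : (gcd_entries D %| D i j)%Z.
  apply: dvdz_trans (big_gcdz_dvd _ (mem_index_enum i)) _.
  exact: big_gcdz_dvd (mem_index_enum j).
have gcd_ge0 : 0 <= gcd_entries D.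
  by rewrite /gcd_entries; case: (index_enum _) => [|? ?]; rewrite ?big_nil ?big_cons.
by rewrite Dij1 dvdz1 => /eqP abs1; rewrite -(gez0_abs gcd_ge0) abs1.
Qed.

Lemma card_ord_count n (P : pred nat) : #|[set j : 'I_n | P j]| = count P (iota 0 n).
Proof.
by rewrite cardsE -sum1_card -(big_mkord P (fun _ => 1%N)) sum1_count /index_iota subn0.
Qed.

Lemma count_mem_nth (s : seq nat) x :
  count_mem x s = count (fun j => nth 0%N s j == x) (iota 0 (size s)).
Proof. by rewrite -{1}(mkseq_nth 0%N s) /mkseq count_map. Qed.

Definition word_mx (m k : nat) (w : seq letter) : 'M[int]_(m, k) :=
  \matrix_(i, j) if nth 0%N (rows w) j == i then (if (nth (0%N, true) w j).2 then 1 else -1)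
                 else 0.

Definition pivoted (m : nat) (w : seq letter) : Prop :=
  [/\ forall i, (i < m)%N -> i \in rows w,
      forall i, (i.+1 < m)%N -> (first_occ w i < first_occ w i.+1)%N &
      forall i, (i < m)%N -> (nth (0%N, true) w (first_occ w i)).2].

Section WordMatrix.
Variables (m k : nat) (w : seq letter).
Hypotheses (size_w : size w = k) (rows_w : all (fun x : letter => x.1 < m)%N w).

Let size_rows : size (rows w) = k.
Proof. by rewrite size_map. Qed.

Lemma row_lt (j : 'I_k) : (nth 0%N (rows w) j < m)%N.
Proof. by rewrite (nth_map (0%N, true)) ?size_w //; apply: (all_nthP _ rows_w); rewrite size_w. Qed.

Lemma word_mx_neq0 i j : (word_mx m k w i j != 0) = (nth 0%N (rows w) j == i).
Proof. by rewrite mxE; case: ifP => _; [case: ifP | rewrite eqxx]. Qed.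

Lemma word_mx_entries i j : word_mx m k w i j \in [:: 0; 1; -1].
Proof. by rewrite mxE; case: ifP => _; [case: ifP|]; rewrite !inE. Qed.

Lemma card_word_mx_col j : #|[set i | word_mx m k w i j != 0]| = 1%N.
Proof.
apply/eqP/cards1P; exists (Ordinal (row_lt j)); apply/setP => i.
by rewrite !inE word_mx_neq0 eq_sym.
Qed.

Lemma card_word_mx_row i : #|[set j | word_mx m k w i j != 0]| = count_mem (i : nat) (rows w).
Proof.
rewrite count_mem_nth size_rows -card_ord_count; congr #|pred_of_set _|.
by apply/setP => j; rewrite !inE word_mx_neq0.
Qed.

Lemma pivoted_k_admissible : (0 < m <= k - 1)%N -> pivoted m w -> k_admissible (word_mx m k w).
Proof.
move=> m_bounds [present first_incr first_pos].
have first_lt (i : 'I_m) : (first_occ w i < k)%N.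
  by rewrite -size_rows index_mem present.
pose nu i := Ordinal (first_lt i).
have nu_incr (i j : 'I_m) : (i < j)%N -> (nu i < nu j)%N.
  by move=> lt_ij; apply: ltn_homo_bounded first_incr _ _ lt_ij (ltn_ord j).
have [mu div] := division_complement m_bounds nu_incr.
have word_mx_nu (i j : 'I_m) : word_mx m k w i (nu j) = (i == j)%:R.
  rewrite mxE /= nth_index ?present // first_pos //.
  by rewrite (inj_eq val_inj) eq_sym; case: eqP.
case/andP: m_bounds => m_gt0 _.
exists nu, mu, 1; split=> //; split=> //.
- by move=> j; exists (Ordinal (row_lt j)); rewrite word_mx_neq0.
- apply: (gcd_entries_eq1 (i := Ordinal m_gt0) (j := nu (Ordinal m_gt0))).
  by rewrite word_mx_nu eqxx.
- by move=> i j; rewrite word_mx_nu mul1r.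
- move=> i j lt_mu_nu; apply/eqP; rewrite -[_ == 0]negbK word_mx_neq0; apply/negP => /eqP row_mu.
  have le_first : (first_occ w i <= mu j)%N by rewrite /first_occ -row_mu index_nth ?size_rows.
  by have := leq_ltn_trans le_first lt_mu_nu; rewrite ltnn.
Qed.

Lemma k_admissible_pivoted : k_admissible (word_mx m k w) -> pivoted m w.
Proof.
case=> nu [mu [q [div [q_gt0 _ _ nu_piv mu_zero]]]].
have m_gt0 : (0 < m)%N by case: div => /andP [].
have q1 : q = 1.
  have := word_mx_entries (Ordinal m_gt0) (nu (Ordinal m_gt0)).
  by rewrite nu_piv eqxx mulr1 !inE => /or3P [] /eqP q_val; rewrite q_val in q_gt0 *.
have word_mx_nu (i : 'I_m) : word_mx m k w i (nu i) = 1 by rewrite nu_piv eqxx q1 mulr1.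
have row_nu (i : 'I_m) : nth 0%N (rows w) (nu i) = i.
  by apply/eqP; rewrite -word_mx_neq0 word_mx_nu oner_neq0.
have first_nu (i : 'I_m) : first_occ w i = nu i.
  apply/eqP; rewrite eqn_leq -{1}(row_nu i) index_nth ?size_rows //=.
  rewrite leqNgt; apply/negP => lt_first.
  have first_k : (first_occ w i < k)%N := ltn_trans lt_first (ltn_ord _).
  have nz : word_mx m k w i (Ordinal first_k) != 0.
    by rewrite word_mx_neq0 /= nth_index // -(row_nu i) mem_nth ?size_rows.
  case: (division_cover div (Ordinal first_k)) => [[i' nu_i'] | [j mu_j]].
    have i'_i : i' = i by apply/val_inj/eqP => /=; rewrite -{1}(row_nu i') -word_mx_neq0 nu_i'.
    by move: lt_first; have /= <- := congr1 val nu_i'; rewrite i'_i ltnn.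
  by move: nz; rewrite -mu_j mu_zero ?eqxx // mu_j.
have {}first_nu i (lt_i : (i < m)%N) : first_occ w i = nu (Ordinal lt_i) := first_nu (Ordinal lt_i).
split=> i lt_i.
- by rewrite -[i](row_nu (Ordinal lt_i)) mem_nth ?size_rows.
- by rewrite (first_nu _ (ltnW lt_i)) (first_nu _ lt_i); case: div => _ nu_incr _ _; apply: nu_incr.
- have := word_mx_nu (Ordinal lt_i); rewrite mxE row_nu eqxx (first_nu _ lt_i).
  by case: (nth _ w _).2.
Qed.

End WordMatrix.

Section MatrixWord.
Variables (m k : nat) (D : 'M[int]_(m, k)).
Hypotheses (D_entries : forall i j, D i j \in [:: 0; 1; -1])
           (D_cols : forall j, #|[set i | D i j != 0]| = 1%N).

Definition mx_word : seq letter :=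
  [seq oapp (fun i : 'I_m => (val i, D i j == 1)) (0%N, true) [pick i | D i j != 0]
  | j <- enum 'I_k].

Lemma mx_word_spec : [/\ size mx_word = k, all (fun x : letter => x.1 < m)%N mx_word
                       & word_mx m k mx_word = D].
Proof.
have [r D_nz] : exists r : 'I_k -> 'I_m, forall i j, (D i j != 0) = (i == r j).
  suff /fin_all_exists [r D_nz] : forall j, exists rj : 'I_m, forall i, (D i j != 0) = (i == rj).
    by exists r => i j; apply: D_nz.
  move=> j; have /eqP/cards1P [rj D_col] := D_cols j; exists rj => i.
  by rewrite -in_set1 -D_col inE.
have pick_r j : [pick i | D i j != 0] = Some (r j).
  by case: pickP => [i | /(_ (r j))]; rewrite D_nz ?eqxx // => /eqP ->.
have nth_w (j : 'I_k) : nth (0%N, true) mx_word j = (val (r j), D (r j) j == 1).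
  by rewrite (nth_map j) ?size_enum_ord // nth_ord_enum pick_r.
have size_w : size mx_word = k by rewrite size_map size_enum_ord.
split=> //; first by apply/allP => _ /mapP [j _ ->]; rewrite pick_r /=.
apply/matrixP => i j; rewrite mxE (nth_map (0%N, true)) ?size_w // (nth_w j) /=.
case: (eqVneq (r j) i) => [<- | r_neq].
  have := D_entries (r j) j; have : D (r j) j != 0 by rewrite D_nz.
  by rewrite eqxx !inE => /negbTE -> /= /orP [] /eqP ->.
have /negPn/eqP -> : ~~ (D i j != 0) by rewrite D_nz eq_sym (negbTE r_neq).
by rewrite (inj_eq val_inj) (negbTE r_neq).
Qed.

End MatrixWord.

Lemma word_mx_inj m k (w1 w2 : seq letter) : size w1 = k -> size w2 = k ->
  all (fun x : letter => x.1 < m)%N w1 -> word_mx m k w1 = word_mx m k w2 -> w1 = w2.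
Proof.
move=> size_w1 size_w2 rows_w1 eq_mx.
apply: (eq_from_nth (x0 := (0%N, true))) => [|p]; first by rewrite size_w1 size_w2.
rewrite size_w1 => lt_pk; pose j := Ordinal lt_pk; pose i := Ordinal (row_lt size_w1 rows_w1 j).
have row_eq : nth 0%N (rows w2) j = i.
  by apply/eqP; rewrite -word_mx_neq0 -eq_mx word_mx_neq0.
have := congr1 (fun M : 'M_(m, k) => M i j) eq_mx; rewrite /= !mxE row_eq eqxx.
have {row_eq} : nth 0%N (rows w2) p = nth 0%N (rows w1) p := row_eq.
rewrite !(nth_map (0%N, true)) ?size_w1 ?size_w2 //.
case: (nth _ w1 p) (nth _ w2 p) => [a1 s1] [a2 s2] /= ->.
by case: s1; case: s2.
Qed.

Lemma in_X_word_mx k m (kk : nat -> nat) (w : seq letter) : (0 < m <= k - 1)%N ->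
  (forall i, (i < m)%N -> (0 < kk i)%N) -> (\sum_(i < m) kk i)%N = k ->
  size w = k -> all (fun x : letter => x.1 < m)%N w ->
  in_X kk (word_mx m k w) <-> admissible_word (mkseq kk m) w.
Proof.
move=> m_bounds kk_gt0 sum_kk size_w rows_w; rewrite /admissible_word size_mkseq sumn_mkseq sum_kk.
have count_kk i (lt_i : (i < m)%N) :
    #|[set j | word_mx m k w (Ordinal lt_i) j != 0]| = count_mem i (rows w).
  exact: card_word_mx_row.
split.
- case=> /(k_admissible_pivoted size_w) [_ first_incr first_pos] _ _ rows_card.
  by split=> // i lt_i; rewrite nth_mkseq // -count_kk.
- case=> _ _ count_w first_incr first_pos; split=> //.
  + apply: pivoted_k_admissible => //; split=> // i lt_i.
    by rewrite -has_pred1 has_count count_w ?nth_mkseq ?kk_gt0.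
  + exact: word_mx_entries.
  + exact: card_word_mx_col.
  + by move=> i; rewrite card_word_mx_row // count_w ?nth_mkseq.
Qed.

Theorem proposition3p4 (k m : nat) (kk : nat -> nat)
  (hk : (2 <= k)%N) (hm : (1 <= m <= k - 1)%N)
  (hpos : forall i, (i < m)%N -> (0 < kk i)%N)
  (hsum : (\sum_(i < m) kk i)%N = k) :
  exists s : seq 'M[int]_(m, k),
    [/\ uniq s,
        (forall D, in_X kk D <-> D \in s) &
        size s = (2 ^ (k - m) *
                  \prod_(i < m.-1) 'C(k - \sum_(j < i) kk j - 1, kk i - 1))%N].
Proof.
have c_pos := all_gt0_mkseq hpos.
have word_dims w : w \in admissible_words (mkseq kk m) ->
    size w = k /\ all (fun x : letter => x.1 < m)%N w.
  case/(mem_admissible_words c_pos) => sw rows_w _ _ _.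
  by rewrite size_mkseq sumn_mkseq hsum in sw rows_w.
exists (map (word_mx m k) (admissible_words (mkseq kk m))); split.
- rewrite map_inj_in_uniq ?uniq_admissible_words // => w1 w2.
  by move=> /word_dims [sw1 rows_w1] /word_dims [sw2 _]; apply: word_mx_inj.
- move=> D; split.
  + case=> adm D_entries D_cols D_rows.
    have [size_w rows_w D_word] := mx_word_spec D_entries D_cols.
    rewrite -D_word; apply/map_f/(mem_admissible_words c_pos).
    by apply/(in_X_word_mx hm hpos hsum size_w rows_w); rewrite D_word.
  + case/mapP=> w w_adm ->; have [size_w rows_w] := word_dims w w_adm.
    by apply/(in_X_word_mx hm hpos hsum size_w rows_w)/mem_admissible_words.
- by case/andP: hm => m_gt0 _; rewrite size_map (size_admissible_words_mkseq m_gt0 hpos hsum).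
Qed.
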